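(* Let $K$ be a field, $q\in K\setminus\{0\}$ not a root of unity, and let $A=K\langle a,b\rangle/(ab-qba-1)$ be the quantized Weyl algebra. Let $w=ab-ba$ (a normal element), and let $\sigma$ be the automorphism of $A$ with $\sigma(a)=q^{-1}a$, $\sigma(b)=qb$, so that $wy=\sigma(y)w$ for all $y\in A$. Let $J=Aa$ and $x=(1-q)b-1$. Then: (a) $J$ is a maximal left ideal of $A$, and for every $m\ge0$ there is no $c\in A$ with $\sigma^m(x)c-1\in J$; (b) the left $A$-module $N=A/Ax$ is not artinian, and its nonzero submodules are exactly the modules $w^mN$, $m\ge 0$, which form a strictly descending chain $N\supsetneq wN\supsetneq w^2N\supsetneq\cdots$. *)

From HB Require Import structures.
From mathcomp Require Import all_boot all_order all_algebra.
Set Implicit Arguments. Unset Strict Implicit. Unset Printing Implicit Defensive.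
Import GRing.Theory.
Local Open Scope ring_scope.

Definition is_alg_morph (K : fieldType) (A B : algType K) (f : A -> B) : Prop :=
  [/\ (forall x y, f (x + y) = f x + f y),
      (forall (k : K) x, f (k *: x) = k *: f x),
      (forall x y, f (x * y) = f x * f y) & f 1 = 1].

Definition qWeyl_rel (K : fieldType) (B : algType K) (q : K) (a b : B) : Prop :=
  a * b - q *: (b * a) - 1 = 0.

(* (A, a, b) is the K-algebra K<a,b>/(ab - q ba - 1), characterised (up to
   unique isomorphism) by the universal property of the presentation. *)
Definition is_qWeyl_algebra (K : fieldType) (q : K) (A : algType K) (a b : A) : Prop :=
  qWeyl_rel q a b /\
  forall (B : algType K) (a' b' : B), qWeyl_rel q a' b' ->
    (exists f : A -> B, [/\ is_alg_morph f, f a = a' & f b = b']) /\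
    (forall f g : A -> B, is_alg_morph f -> is_alg_morph g ->
        f a = g a -> f b = g b -> f =1 g).

Definition pred_eq (R : Type) (S T : R -> Prop) : Prop := forall y, S y <-> T y.

Definition left_ideal (R : ringType) (I : R -> Prop) : Prop :=
  [/\ I 0, (forall x y, I x -> I y -> I (x + y)) & (forall r x, I x -> I (r * x))].

Definition lprinc (R : ringType) (x : R) : R -> Prop := fun y => exists c, y = c * x.

Definition maximal_left_ideal (R : ringType) (I : R -> Prop) : Prop :=
  [/\ left_ideal I, (exists y, ~ I y) &
      forall I', left_ideal I' -> (forall y, I y -> I' y) ->
        pred_eq I' I \/ (forall y, I' y)].

(* Submodules of the cyclic left module R/L, encoded (correspondence theorem)
   by their preimages in R: left ideals containing L. *)
Definition submod_quot (R : ringType) (L S : R -> Prop) : Prop :=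
  left_ideal S /\ (forall y, L y -> S y).

Definition nonzero_submod (R : ringType) (L S : R -> Prop) : Prop :=
  exists y, S y /\ ~ L y.

Definition artinian_quot (R : ringType) (L : R -> Prop) : Prop :=
  forall S : nat -> R -> Prop, (forall n, submod_quot L (S n)) ->
    (forall n y, S n.+1 y -> S n y) ->
    exists n, forall k, (n <= k)%N -> pred_eq (S k) (S n).

(* Preimage in R of the submodule r (R/L) = { r * (n + L) } of R/L. *)
Definition lmul_submod (R : ringType) (L : R -> Prop) (r : R) : R -> Prop :=
  fun y => exists n, L (y - r * n).

From HB Require Import structures.
From mathcomp Require Import all_boot all_order all_algebra.
From mathcomp Require Import boolp ring.
Import GRing.Theory.
Local Open Scope ring_scope.

Set Implicit Arguments.
Unset Strict Implicit.
Unset Printing Implicit Defensive.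

(* The quantized Weyl algebra A acts on K[t] in two ways: by a |-> D_q (the Jackson
   q-derivative) and b |-> t; and by a |-> (1 - q t) p(q t) and b |-> p(t / q) / (1 - q), where
   w = ab - ba acts as multiplication by t and x = (1 - q) b - 1 kills 1. As A = K[b] + A a and
   A = K[w] + A x, the maps y |-> y.1 identify A / A a and N = A / A x with K[t].
   In the first model K[t] is simple, since D_q lowers the degree and only kills constants, so
   A a is maximal; and evaluating (k t - 1) p(t) - 1 at t = 1/k shows that k b - 1 has no right
   inverse modulo A a for k != 0, in particular for sigma^m(x) = (1 - q) q^m b - 1.
   In the second model b acts diagonally on the monomials t^i, with the pairwise distinct
   eigenvalues q^-i / (1 - q), so every submodule is spanned by monomials; since w acts by t,
   the nonzero submodules are the t^m K[t] = w^m N. *)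

Record subspace (K : fieldType) (V : lmodType K) := Subspace {
  subspace_mem :> V -> Prop;
  subspace0 : subspace_mem 0;
  subspaceD : forall u v, subspace_mem u -> subspace_mem v -> subspace_mem (u + v);
  subspaceZ : forall (k : K) u, subspace_mem u -> subspace_mem (k *: u) }.

Definition fullsp (K : fieldType) (V : lmodType K) : subspace V :=
  @Subspace K V (fun _ => True) I (fun _ _ _ _ => I) (fun _ _ _ => I).

Record endo (K : fieldType) (V : lmodType K) (S : subspace V) := Endo {
  endo_fun :> V -> V;
  endoD : forall u v, endo_fun (u + v) = endo_fun u + endo_fun v;
  endoZ : forall (k : K) u, endo_fun (k *: u) = k *: endo_fun u;
  endo_stable : forall u, S u -> S (endo_fun u) }.

Section EndoAlgebra.
Variables (K : fieldType) (V : lalgType K) (S : subspace V).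
Local Notation E := (endo S).

Lemma endo_ext (f g : E) : f =1 g -> f = g.
Proof.
case: f g => f fD fZ fS [g gD gZ gS] /= /funext eq_fg; subst g.
by congr Endo; apply: Prop_irrelevance.
Qed.

HB.instance Definition _ := gen_eqMixin E.
HB.instance Definition _ := gen_choiceMixin E.

Lemma endo0 (f : E) : f 0 = 0.
Proof. by have := endoZ f 0 0; rewrite !scale0r. Qed.

Definition endo_zero : E :=
  @Endo K V S (fun _ => 0) (fun _ _ => esym (addr0 0)) (fun k _ => esym (scaler0 _ k))
    (fun _ _ => subspace0 S).

Definition endo_add (f g : E) : E.
Proof.
refine (@Endo K V S (fun v => f v + g v) _ _ _).
- by move=> u v; rewrite !endoD addrACA.
- by move=> k u; rewrite !endoZ scalerDr.
- by move=> u Su; apply: subspaceD; apply: endo_stable.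
Defined.

Definition endo_opp (f : E) : E.
Proof.
refine (@Endo K V S (fun v => - f v) _ _ _).
- by move=> u v; rewrite endoD opprD.
- by move=> k u; rewrite endoZ scalerN.
- by move=> u Su; rewrite -scaleN1r; apply: subspaceZ; apply: endo_stable.
Defined.

Definition endo_one : E := @Endo K V S id (fun _ _ => erefl) (fun _ _ => erefl) (fun _ Su => Su).

Definition endo_mul (f g : E) : E.
Proof.
refine (@Endo K V S (fun v => f (g v)) _ _ _).
- by move=> u v; rewrite !endoD.
- by move=> k u; rewrite !endoZ.
- by move=> u Su; do 2 apply: endo_stable.
Defined.

Definition endo_scale (k : K) (f : E) : E.
Proof.
refine (@Endo K V S (fun v => k *: f v) _ _ _).
- by move=> u v; rewrite endoD scalerDr.
- by move=> c u; rewrite endoZ !scalerA mulrC.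
- by move=> u Su; apply: subspaceZ; apply: endo_stable.
Defined.

Lemma endo_addA : associative endo_add.
Proof. by move=> f g h; apply: endo_ext => v /=; rewrite addrA. Qed.
Lemma endo_addC : commutative endo_add.
Proof. by move=> f g; apply: endo_ext => v /=; rewrite addrC. Qed.
Lemma endo_add0 : left_id endo_zero endo_add.
Proof. by move=> f; apply: endo_ext => v /=; rewrite add0r. Qed.
Lemma endo_addN : left_inverse endo_zero endo_opp endo_add.
Proof. by move=> f; apply: endo_ext => v /=; rewrite addNr. Qed.
HB.instance Definition _ := GRing.isZmodule.Build E endo_addA endo_addC endo_add0 endo_addN.

Lemma endo_mulA : associative endo_mul. Proof. by move=> f g h; apply: endo_ext. Qed.
Lemma endo_mul1 : left_id endo_one endo_mul. Proof. by move=> f; apply: endo_ext. Qed.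
Lemma endo_mulr1 : right_id endo_one endo_mul. Proof. by move=> f; apply: endo_ext. Qed.
Lemma endo_mulDl : left_distributive endo_mul endo_add.
Proof. by move=> f g h; apply: endo_ext. Qed.
Lemma endo_mulDr : right_distributive endo_mul endo_add.
Proof. by move=> f g h; apply: endo_ext => v /=; rewrite endoD. Qed.
Lemma endo_one_neq0 : endo_one != endo_zero.
Proof. by apply/eqP => /(congr1 (fun f : E => f 1)) /eqP; rewrite oner_eq0. Qed.
HB.instance Definition _ := GRing.Zmodule_isNzRing.Build E
  endo_mulA endo_mul1 endo_mulr1 endo_mulDl endo_mulDr endo_one_neq0.

Lemma endo_scaleA a b (f : E) : endo_scale a (endo_scale b f) = endo_scale (a * b) f.
Proof. by apply: endo_ext => v /=; rewrite scalerA. Qed.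
Lemma endo_scale1 : left_id 1 endo_scale.
Proof. by move=> f; apply: endo_ext => v /=; rewrite scale1r. Qed.
Lemma endo_scaleDr : right_distributive endo_scale +%R.
Proof. by move=> k f g; apply: endo_ext => v /=; rewrite scalerDr. Qed.
Lemma endo_scaleDl (f : E) : {morph endo_scale^~ f : a b / a + b}.
Proof. by move=> a b; apply: endo_ext => v /=; rewrite scalerDl. Qed.
HB.instance Definition _ := GRing.Zmodule_isLmodule.Build K E
  endo_scaleA endo_scale1 endo_scaleDr endo_scaleDl.

Lemma endo_scaleAl (k : K) (f g : E) : k *: (f * g) = (k *: f) * g.
Proof. exact: endo_ext. Qed.
HB.instance Definition _ := GRing.Lmodule_isLalgebra.Build K E endo_scaleAl.
Lemma endo_scaleAr (k : K) (f g : E) : k *: (f * g) = f * (k *: g).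
Proof. by apply: endo_ext => v /=; rewrite endoZ. Qed.
HB.instance Definition _ := GRing.Lalgebra_isAlgebra.Build K E endo_scaleAr.

Lemma endo_zeroE v : (0 : E) v = 0. Proof. by []. Qed.
Lemma endo_addE (f g : E) v : (f + g) v = f v + g v. Proof. by []. Qed.
Lemma endo_oppE (f : E) v : (- f) v = - f v. Proof. by []. Qed.
Lemma endo_mulE (f g : E) v : (f * g) v = f (g v). Proof. by []. Qed.
Lemma endo_oneE v : (1 : E) v = v. Proof. by []. Qed.
Lemma endo_scaleE k (f : E) v : (k *: f) v = k *: f v. Proof. by []. Qed.
Definition endoE := (endo_zeroE, endo_addE, endo_oppE, endo_mulE, endo_oneE, endo_scaleE).

End EndoAlgebra.

Definition lmul_endo (K : fieldType) (A : algType K) (S : subspace A) (y : A)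
    (Sy : forall u, S u -> S (y * u)) : endo S :=
  @Endo K A S (fun u => y * u) (mulrDr y) (fun k u => esym (scalerAr k y u)) Sy.

Section AlgMorph.
Variables (K : fieldType) (A B : algType K) (f : A -> B) (hf : is_alg_morph f).
Lemma alg_morphD u v : f (u + v) = f u + f v. Proof. by case: hf. Qed.
Lemma alg_morphZ k u : f (k *: u) = k *: f u. Proof. by case: hf. Qed.
Lemma alg_morphM u v : f (u * v) = f u * f v. Proof. by case: hf. Qed.
Lemma alg_morph1 : f 1 = 1. Proof. by case: hf. Qed.
Lemma alg_morph0 : f 0 = 0. Proof. by have := alg_morphZ 0 0; rewrite !scale0r. Qed.
Lemma alg_morphB u v : f (u - v) = f u - f v.
Proof. by rewrite alg_morphD -scaleN1r alg_morphZ scaleN1r. Qed.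
Lemma alg_morph_horner (y : A) (p : {poly K}) : f (horner_alg y p) = horner_alg (f y) p.
Proof.
elim/poly_ind: p => [|p c IH]; first by rewrite !rmorph0 alg_morph0.
by rewrite !rmorphD !rmorphM /= !horner_algC !horner_algX
  alg_morphD alg_morphM IH alg_morphZ alg_morph1.
Qed.
End AlgMorph.

Definition lmul_full (K : fieldType) (V : algType K) (y : V) : endo (fullsp V) :=
  @lmul_endo _ _ (fullsp V) y (fun _ _ => I).

Lemma lmul_fullE (K : fieldType) (V : algType K) (y u : V) : lmul_full y u = y * u.
Proof. by []. Qed.

Lemma lmul_full_morph (K : fieldType) (V : algType K) : is_alg_morph (@lmul_full K V).
Proof.
by split=> [u v|k u|u v|]; apply: endo_ext => w /=; rewrite ?mulrDl ?scalerAl ?mulrA ?mul1r.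
Qed.

Section QuantizedWeyl.
Variables (K : fieldType) (q : K) (A : algType K) (a b : A).
Hypothesis hA : is_qWeyl_algebra q a b.

Lemma qWeyl_ab : a * b = q *: (b * a) + 1.
Proof. by case: hA => /subr0_eq <- _; rewrite addrC subrK. Qed.

Lemma qWeyl_morph (B : algType K) (a' b' : B) : qWeyl_rel q a' b' ->
  exists f : A -> B, [/\ is_alg_morph f, f a = a' & f b = b'].
Proof. by case: hA => _ univ /univ []. Qed.

Lemma qWeyl_rel_lmul (S : subspace A) (Sa : forall u, S u -> S (a * u))
    (Sb : forall u, S u -> S (b * u)) :
  qWeyl_rel q (lmul_endo Sa) (lmul_endo Sb).
Proof.
apply: endo_ext => v /=.
by rewrite !mulrA scalerAl -[v in _ - v]mul1r -!mulrBl (proj1 hA) mul0r.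
Qed.

(* A is spanned by the words in a and b: the restriction of the regular representation to a
   subspace Q stable under left multiplication by a and b is a representation of A, and by
   uniqueness in the universal property it agrees with the regular one. *)
Lemma qWeyl_lmul_ind (Q : A -> Prop) : Q 1 ->
    (forall u v, Q u -> Q v -> Q (u + v)) -> (forall (k : K) u, Q u -> Q (k *: u)) ->
    (forall u, Q u -> Q (a * u)) -> (forall u, Q u -> Q (b * u)) ->
  forall y, Q y.
Proof.
move=> Q1 QD QZ Qa Qb y.
have Q0 : Q 0 by rewrite -(scale0r (1 : A)); apply: QZ.
pose S := Subspace Q0 QD QZ.
have [phi [phi_morph phi_a phi_b]] := qWeyl_morph (qWeyl_rel_lmul (S := S) Qa Qb).
pose forget (f : endo S) : endo (fullsp A) :=
  @Endo K A (fullsp A) f (endoD f) (endoZ f) (fun _ _ => I).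
have forget_phi_morph : is_alg_morph (forget \o phi).
  case: phi_morph => phiD phiZ phiM phi1.
  by split=> [u v|k u|u v|] /=; rewrite ?phiD ?phiZ ?phiM ?phi1; apply: endo_ext.
have rel_full := qWeyl_rel_lmul (S := fullsp A) (fun _ _ => I) (fun _ _ => I).
have [_ uniq] := proj2 hA _ _ _ rel_full.
have agree : forget \o phi =1 @lmul_full _ A.
  apply: uniq forget_phi_morph (lmul_full_morph A) _ _;
  by rewrite /= ?phi_a ?phi_b; apply: endo_ext.
have := congr1 (fun f : endo _ => f 1) (agree y); rewrite /= mulr1 => <-.
exact: (endo_stable (phi y) Q1).
Qed.

End QuantizedWeyl.

Lemma horner_alg_comm (K : fieldType) (A : algType K) (u v : A) (k : K) :
  u * v = k *: (v * u) ->
  forall p, u * horner_alg v p = horner_alg v (p \Po (k *: 'X)) * u.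
Proof.
move=> uv; elim/poly_ind => [|p c IH]; first by rewrite comp_poly0 !rmorph0 mulr0 mul0r.
rewrite comp_polyD comp_polyM comp_polyX comp_polyC !rmorphD !rmorphM /=.
rewrite !horner_algC !horner_algX linearZ /= horner_algX.
rewrite mulrDr [u * (_ * v)]mulrA IH -mulrA uv mulrDl !mulr_algl mulr_algr.
by rewrite -mulrA scalerAl.
Qed.

Section Decompositions.
Variables (K : fieldType) (q : K) (A : algType K) (a b : A).
Hypothesis hA : is_qWeyl_algebra q a b.
Local Notation w := (a * b - b * a).
Local Notation x := ((1 - q) *: b - 1).

Definition in_poly_lprinc (v u y : A) := exists p c, y = horner_alg v p + c * u.

Lemma in_poly_lprinc_lmul (v u r y : A) :
    (forall p, in_poly_lprinc v u (r * horner_alg v p)) ->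
  in_poly_lprinc v u y -> in_poly_lprinc v u (r * y).
Proof.
move=> hr [p [c ->]]; have [p' [c' e]] := hr p.
by exists p', (c' + r * c); rewrite mulrDr e mulrDl mulrA addrA.
Qed.

Lemma in_poly_lprincT (v u : A) :
    (forall p, in_poly_lprinc v u (a * horner_alg v p)) ->
    (forall p, in_poly_lprinc v u (b * horner_alg v p)) ->
  forall y, in_poly_lprinc v u y.
Proof.
move=> ha hb; apply: (qWeyl_lmul_ind hA).
- by exists 1, 0; rewrite rmorph1 mul0r addr0.
- move=> _ _ [p [c ->]] [p' [c' ->]]; exists (p + p'), (c + c').
  by rewrite rmorphD mulrDl addrACA.
- move=> k _ [p [c ->]]; exists (k *: p), (k *: c).
  by rewrite linearZ /= mulr_algl scalerDr scalerAl.
- by move=> y; apply: in_poly_lprinc_lmul.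
- by move=> y; apply: in_poly_lprinc_lmul.
Qed.

Lemma a_horner_b p : exists p1 p2, a * horner_alg b p = horner_alg b p1 + horner_alg b p2 * a.
Proof.
elim/poly_ind: p => [|p c [p1 [p2 IH]]].
  by exists 0, 0; rewrite !rmorph0 mulr0 mul0r addr0.
exists (p1 * 'X + p2), (q *: (p2 * 'X) + c%:P).
rewrite !rmorphD !rmorphM /= linearZ /= rmorphM /= !horner_algX !horner_algC.
rewrite mulrDr [a * (_ * b)]mulrA IH mulrDl -mulrA (qWeyl_ab hA) mulrDr mulr1 mulr_algr.
rewrite mulrDl !mulr_algl -scalerAr -scalerAl -mulrA.
by rewrite -!addrA; congr (_ + _); rewrite addrCA addrA.
Qed.

Lemma in_poly_b_a y : in_poly_lprinc b a y.
Proof.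
apply: in_poly_lprincT => p; last first.
  by exists ('X * p), 0; rewrite rmorphM /= horner_algX mul0r addr0.
by have [p1 [p2 ->]] := a_horner_b p; exists p1, (horner_alg b p2).
Qed.

Lemma qWeyl_w : w = (q - 1) *: (b * a) + 1.
Proof. by rewrite (qWeyl_ab hA) scalerBl scale1r addrAC. Qed.

Lemma qWeyl_wb : w * b = q *: (b * w).
Proof.
rewrite qWeyl_w mulrDl mul1r -scalerAl -mulrA (qWeyl_ab hA) mulrDr mulr1 -scalerAr.
rewrite mulrDr mulr1 -scalerAr !scalerDr !scalerA [(q - 1) * q]mulrC -addrA.
by rewrite scalerBl scale1r subrK.
Qed.

Lemma qWeyl_aw : a * w = q *: (w * a).
Proof.
rewrite qWeyl_w mulrDr mulr1 -scalerAr mulrA (qWeyl_ab hA) mulrDl mul1r -scalerAl.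
rewrite mulrDl mul1r -scalerAl !scalerDr !scalerA [(q - 1) * q]mulrC -!mulrA -addrA.
by rewrite scalerBl scale1r subrK.
Qed.

Lemma qWeyl_a_x : a = 1 - q *: w - a * x.
Proof.
rewrite qWeyl_w mulrBr mulr1 -scalerAr (qWeyl_ab hA).
have e : (1 - q) *: (q *: (b * a) + 1) + q *: ((q - 1) *: (b * a) + 1) = 1.
  rewrite !scalerDr !scalerA addrACA -!scalerDl.
  have -> : (1 - q) * q + q * (q - 1) = 0 by ring.
  by rewrite scale0r add0r subrK scale1r.
by rewrite -[X in X - _ - _]e addrK opprB addrC subrK.
Qed.

Hypotheses (hq0 : q != 0) (hq1 : 1 - q != 0).

Lemma qWeyl_bw : b * w = q^-1 *: (w * b).
Proof. by rewrite qWeyl_wb scalerA mulVf // scale1r. Qed.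

Lemma in_poly_w_x y : in_poly_lprinc w x y.
Proof.
apply: in_poly_lprincT => p.
  rewrite (horner_alg_comm qWeyl_aw); set p' := p \Po _; set h := horner_alg w p'.
  exists (p' - q *: (p' * 'X)), (- (h * a)).
  rewrite rmorphB /= linearZ rmorphM /= horner_algX mulr_algl mulNr.
  by rewrite {1}qWeyl_a_x mulrBr mulrBr mulr1 -scalerAr mulrA.
rewrite (horner_alg_comm qWeyl_bw); set h := horner_alg w _.
exists ((1 - q)^-1 *: (p \Po (q^-1 *: 'X))), ((1 - q)^-1 *: h).
have b_x : b = (1 - q)^-1 *: (x + 1) by rewrite subrK scalerA mulVf // scale1r.
by rewrite {1}b_x linearZ /= mulr_algl -scalerAr -scalerAl mulrDr mulr1 scalerDr addrC.
Qed.

End Decompositions.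

Lemma horner_alg_polyX (K : fieldType) (p : {poly K}) : horner_alg 'X p = p.
Proof.
elim/poly_ind: p => [|p c IH]; first by rewrite rmorph0.
by rewrite rmorphD rmorphM /= horner_algX horner_algC IH alg_polyC.
Qed.

Lemma lmul_full_horner (K : fieldType) (p : {poly K}) :
  horner_alg (lmul_full 'X) p = lmul_full p.
Proof. by rewrite -(alg_morph_horner (lmul_full_morph _)) horner_alg_polyX. Qed.

Section PolyRepresentation.
Variables (K : fieldType) (A : algType K) (v u : A) (f : A -> endo (fullsp {poly K})).
Hypotheses (f_morph : is_alg_morph f) (f_v : f v = lmul_full 'X) (f_u : f u 1 = 0).
Hypothesis decomp : forall y, in_poly_lprinc v u y.

Definition orbit_map (y : A) : {poly K} := f y 1.
Local Notation phi := orbit_map.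

Lemma orbit_mapM y z : phi (y * z) = f y (phi z).
Proof. by rewrite /phi (alg_morphM f_morph). Qed.
Lemma orbit_mapD y z : phi (y + z) = phi y + phi z.
Proof. by rewrite /phi (alg_morphD f_morph). Qed.
Lemma orbit_mapZ k y : phi (k *: y) = k *: phi y.
Proof. by rewrite /phi (alg_morphZ f_morph). Qed.
Lemma orbit_mapB y z : phi (y - z) = phi y - phi z.
Proof. by rewrite /phi (alg_morphB f_morph). Qed.
Lemma orbit_map1 : phi 1 = 1.
Proof. by rewrite /phi (alg_morph1 f_morph). Qed.

Lemma rep_horner p : f (horner_alg v p) = lmul_full p.
Proof. by rewrite (alg_morph_horner f_morph) f_v lmul_full_horner. Qed.

Lemma orbit_map_horner p : phi (horner_alg v p) = p.
Proof. by rewrite /phi rep_horner /= mulr1. Qed.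

Lemma orbit_map_lprinc y : lprinc u y -> phi y = 0.
Proof. by case=> c ->; rewrite orbit_mapM /phi f_u endo0. Qed.

Lemma orbit_map_eq0 y : phi y = 0 <-> lprinc u y.
Proof.
split; last exact: orbit_map_lprinc.
have [p [c ->]] := decomp y.
rewrite orbit_mapD orbit_map_horner orbit_map_lprinc ?addr0 => [->|]; last by exists c.
by exists c; rewrite rmorph0 add0r.
Qed.

Lemma orbit_map_pow m : phi (v ^+ m) = 'X^m.
Proof. by rewrite -[v](horner_algX v) -rmorphXn orbit_map_horner. Qed.

Lemma lmul_submod_pow m y :
  lmul_submod (lprinc u) (v ^+ m) y <-> exists g, phi y = 'X^m * g.
Proof.
have f_vm : f (v ^+ m) = lmul_full 'X^m by rewrite -[v](horner_algX v) -rmorphXn rep_horner.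
split=> [[n /orbit_map_eq0]|[g phi_y]].
  by rewrite orbit_mapB orbit_mapM f_vm => /subr0_eq ->; exists (phi n).
exists (horner_alg v g); apply/orbit_map_eq0.
by rewrite orbit_mapB orbit_mapM f_vm orbit_map_horner phi_y subrr.
Qed.

End PolyRepresentation.

Section LeftIdeals.
Variable R : nzRingType.

Lemma lprinc_left_ideal (u : R) : left_ideal (lprinc u).
Proof.
split; first by exists 0; rewrite mul0r.
- by move=> _ _ [c ->] [d ->]; exists (c + d); rewrite mulrDl.
- by move=> r _ [c ->]; exists (r * c); rewrite mulrA.
Qed.

Lemma maximal_left_idealP (L : R -> Prop) : left_ideal L -> ~ L 1 ->
  (forall y, ~ L y -> exists r, L (r * y - 1)) -> maximal_left_ideal L.
Proof.
move=> L_ideal L1 L_inv; split=> //; first by exists 1.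
move=> I [I0 ID IM] LI.
have [IL|/existsNP [y /not_implyP [Iy Ly]]] := pselect (forall y, I y -> L y).
  by left=> y; split; auto.
right=> z; have [r Lry] := L_inv y Ly.
have I1 : I 1.
  rewrite -[1](subKr (r * y)); apply: ID; first exact: IM.
  by rewrite -mulN1r; apply: IM; apply: LI.
by rewrite -[z]mulr1; apply: IM.
Qed.

Lemma strict_chain_not_artinian (L : R -> Prop) (S : nat -> R -> Prop) :
    (forall n, submod_quot L (S n)) -> (forall n y, S n.+1 y -> S n y) ->
    (forall n, exists y, S n y /\ ~ S n.+1 y) ->
  ~ artinian_quot L.
Proof.
move=> S_submod S_decr S_strict /(_ S S_submod S_decr) [n S_stable].
have [y [Sy NSy]] := S_strict n.
by apply: NSy; apply/(S_stable n.+1 (leqnSn n)).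
Qed.

End LeftIdeals.

Section QDerivative.
Variables (K : fieldType) (q : K).

Definition qint (n : nat) : K := \sum_(k < n) q ^+ k.

Lemma qintS n : qint n.+1 = 1 + q * qint n.
Proof.
rewrite /qint big_ord_recl expr0 mulr_sumr.
by congr (_ + _); apply: eq_bigr => i _; rewrite exprS.
Qed.

Lemma one_sub_neq0 : (forall k, (0 < k)%N -> q ^+ k != 1) -> 1 - q != 0.
Proof. by move=> hq; rewrite subr_eq0 eq_sym -[q in q != _]expr1 hq. Qed.

Lemma qint_neq0 n : (forall k, (0 < k)%N -> q ^+ k != 1) -> (0 < n)%N -> qint n != 0.
Proof.
move=> hq n_gt0; apply: contra (hq n n_gt0) => /eqP qn0.
by rewrite -subr_eq0 subrX1 -/(qint n) qn0 mulr0.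
Qed.

Definition qderiv (p : {poly K}) : {poly K} := \poly_(i < size p) (qint i.+1 * p`_i.+1).

Lemma coef_qderiv p i : (qderiv p)`_i = qint i.+1 * p`_i.+1.
Proof.
rewrite coef_poly; case: ltnP => // le_p_i.
by rewrite nth_default ?mulr0 // (leq_trans le_p_i).
Qed.

Lemma qderivD p r : qderiv (p + r) = qderiv p + qderiv r.
Proof. by apply/polyP => i; rewrite coefD !coef_qderiv coefD mulrDr. Qed.

Lemma qderivZ k p : qderiv (k *: p) = k *: qderiv p.
Proof. by apply/polyP => i; rewrite coefZ !coef_qderiv coefZ mulrCA. Qed.

Lemma qderivC c : qderiv c%:P = 0.
Proof. by apply/polyP => i; rewrite coef_qderiv coefC coef0 mulr0. Qed.

Lemma size_qderiv p : (size (qderiv p) <= (size p).-1)%N.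
Proof.
apply/leq_sizeP => j le_j; rewrite coef_qderiv nth_default ?mulr0 //.
by case: (size p) le_j => // n; rewrite ltnS.
Qed.

Lemma qderiv_neq0 (p : {poly K}) : (forall k, (0 < k)%N -> q ^+ k != 1) ->
  (1 < size p)%N -> qderiv p != 0.
Proof.
move=> hq; case sz_p: (size p) => [|[|n]] // _.
apply/eqP => /(congr1 (fun r : {poly K} => r`_n)); rewrite coef_qderiv coef0 => /eqP.
rewrite mulf_eq0 (negbTE (qint_neq0 hq _)) //=.
have : lead_coef p != 0 by rewrite lead_coef_eq0 -size_poly_eq0 sz_p.
by rewrite lead_coefE sz_p => /negbTE ->.
Qed.

Definition qderiv_endo : endo (fullsp {poly K}) :=
  @Endo _ _ (fullsp {poly K}) qderiv qderivD qderivZ (fun _ _ => I).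

Lemma qWeyl_rel_qderiv : qWeyl_rel q qderiv_endo (lmul_full 'X).
Proof.
apply: endo_ext => p /=; apply/polyP => i.
rewrite !coefB coefZ !coef_qderiv !coefXM coef0 /=.
case: i => [|i] /=; first by rewrite /qint big_ord1 expr0 mul1r mulr0 subr0 subrr.
by rewrite coef_qderiv qintS mulrDl mul1r mulrA addrK subrr.
Qed.

End QDerivative.

Section LeftIdealAa.
Variables (K : fieldType) (q : K) (A : algType K) (a b : A).
Hypotheses (hq : forall n, (0 < n)%N -> q ^+ n != 1) (hA : is_qWeyl_algebra q a b).
Variables (f : A -> endo (fullsp {poly K})) (f_morph : is_alg_morph f).
Hypotheses (f_a : f a = qderiv_endo q) (f_b : f b = lmul_full 'X).
Local Notation phi := (orbit_map f).

Let f_a1 : f a 1 = 0. Proof. by rewrite f_a /= -polyC1 qderivC. Qed.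
Let phi_eq0 := orbit_map_eq0 f_morph f_b f_a1 (in_poly_b_a hA).

Lemma orbit_map_unit y : phi y != 0 -> exists r, phi (r * y) = 1.
Proof.
move: {2}(size (phi y)) (leqnn (size (phi y))) => n.
elim: n y => [|n IH] y size_y nz_y.
  by move: nz_y; rewrite -size_poly_eq0 -leqn0 size_y.
have phi_ay : phi (a * y) = qderiv q (phi y) by rewrite orbit_mapM // f_a.
have [lt1_y|] := ltnP 1 (size (phi y)).
  have [r phi_ray] : exists r, phi (r * (a * y)) = 1.
    apply: IH; rewrite phi_ay ?qderiv_neq0 //.
    by rewrite (leq_trans (size_qderiv _ _)) // -ltnS (ltn_predK lt1_y).
  by exists (r * a); rewrite -mulrA.
move/size1_polyC => phi_yC; exists (((phi y)`_0)^-1 *: 1).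
have c_neq0 : (phi y)`_0 != 0 by rewrite -polyC_eq0 -phi_yC.
by rewrite -scalerAl mul1r orbit_mapZ // [in X in _ *: X]phi_yC -mul_polyC -polyCM mulVf.
Qed.

Lemma lprinc_a_maximal : maximal_left_ideal (lprinc a).
Proof.
apply: maximal_left_idealP (lprinc_left_ideal a) _ _.
  by move/phi_eq0; rewrite orbit_map1 // => /eqP; rewrite oner_eq0.
move=> y /phi_eq0 /eqP /orbit_map_unit [r phi_ry]; exists r.
by apply/phi_eq0; rewrite orbit_mapB // orbit_map1 // phi_ry subrr.
Qed.

Lemma lprinc_a_no_rinv (k : K) : k != 0 -> ~ exists c, lprinc a ((k *: b - 1) * c - 1).
Proof.
move=> k_neq0 [c /phi_eq0].
rewrite orbit_mapB // orbit_mapM // orbit_map1 // (alg_morphB f_morph) (alg_morphZ f_morph).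
rewrite (alg_morph1 f_morph) f_b /= => /(congr1 (horner^~ k^-1)).
by rewrite !hornerE /= mulfV // mul1r subrr sub0r => /eqP; rewrite oppr_eq0 oner_eq0.
Qed.

End LeftIdealAa.

Lemma iter_alg_morph_affine (K : fieldType) (A : algType K) (sigma : A -> A) (b : A)
    (k c : K) m :
  is_alg_morph sigma -> sigma b = k *: b ->
  iter m sigma (c *: b - 1) = (c * k ^+ m) *: b - 1.
Proof.
move=> sigma_morph sigma_b; elim: m => [|m IH]; first by rewrite mulr1.
rewrite iterS IH (alg_morphB sigma_morph) (alg_morphZ sigma_morph) (alg_morph1 sigma_morph).
by rewrite sigma_b scalerA exprSr mulrA.
Qed.

Lemma take_poly_eq0P (K : fieldType) m (p : {poly K}) :
  take_poly m p = 0 <-> exists g, p = 'X^m * g.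
Proof.
split=> [take0|[g ->]]; last by rewrite mulrC take_polyMXn_0.
by exists (drop_poly m p); rewrite mulrC -{1}(poly_take_drop m p) take0 add0r.
Qed.

Section Dilation.
Variable K : fieldType.

Definition dilate (c : K) : endo (fullsp {poly K}) :=
  @Endo _ _ (fullsp {poly K}) (fun p => p \Po (c *: 'X))
    (fun p r => comp_polyD p r _) (fun k p => comp_polyZ k p _) (fun _ _ => I).

Lemma coef_dilate c p i : (dilate c p)`_i = c ^+ i * p`_i.
Proof.
have -> : dilate c p = \poly_(j < size p) (c ^+ j * p`_j).
  by rewrite /= comp_polyE poly_def; apply: eq_bigr => j _; rewrite exprZn scalerA mulrC.
by rewrite coef_poly; case: ltnP => // le_p_i; rewrite nth_default ?mulr0.
Qed.

Lemma dilateM c d p : dilate c (dilate d p) = dilate (c * d) p.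
Proof. by rewrite /= -comp_polyA comp_polyZ comp_polyX scalerA mulrC. Qed.

Lemma dilate1 p : dilate 1 p = p.
Proof. by rewrite /= scale1r comp_polyXr. Qed.

Lemma dilate_mul c p r : dilate c (p * r) = dilate c p * dilate c r.
Proof. exact: comp_polyM. Qed.

Lemma dilateC c k : dilate c k%:P = k%:P.
Proof. exact: comp_polyC. Qed.

Lemma dilate_mulXn c m p : dilate c ('X^m * p) = 'X^m * (c ^+ m *: dilate c p).
Proof. by rewrite dilate_mul /= comp_Xn_poly exprZn -scalerAl scalerAr. Qed.

End Dilation.

Section DilationModel.
Variables (K : fieldType) (q : K).
Hypotheses (hq0 : q != 0) (hq1 : 1 - q != 0).

Definition dil_a : endo (fullsp {poly K}) := lmul_full (1 - q *: 'X) * dilate q.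
Definition dil_b : endo (fullsp {poly K}) := (1 - q)^-1 *: dilate q^-1.

Lemma dil_ab p : (dil_a * dil_b) p = (1 - q)^-1 *: ((1 - q *: 'X) * p).
Proof. by rewrite !endoE endoZ dilateM mulfV // dilate1 lmul_fullE scalerAr. Qed.

Lemma dil_ba p : (dil_b * dil_a) p = (1 - q)^-1 *: ((1 - 'X) * p).
Proof.
rewrite !endoE lmul_fullE dilate_mul dilateM mulVf // dilate1; congr (_ *: (_ * _)).
by rewrite /= comp_polyB comp_polyZ comp_polyX -polyC1 comp_polyC scalerA mulfV // scale1r.
Qed.

Lemma qWeyl_rel_dilate : qWeyl_rel q dil_a dil_b.
Proof.
apply: endo_ext => p.
rewrite !(endo_zeroE, endo_addE, endo_oppE, endo_scaleE, endo_oneE) dil_ab dil_ba.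
have e : (1 - q *: 'X) - q *: (1 - 'X) = (1 - q) *: (1 : {poly K}).
  by rewrite scalerBr scalerBl scale1r opprB addrA subrK.
rewrite scalerA [q * _]mulrC -scalerA -scalerBr scalerAl -mulrBl e -scalerAl mul1r.
by rewrite scalerA mulVf // scale1r subrr.
Qed.

Lemma dil_commutator : dil_a * dil_b - dil_b * dil_a = lmul_full 'X.
Proof.
apply: endo_ext => p; rewrite endo_addE endo_oppE dil_ab dil_ba -scalerBr -mulrBl lmul_fullE.
have -> : (1 - q *: 'X) - (1 - 'X) = (1 - q) *: 'X :> {poly K}.
  by rewrite opprB addrC addrA subrK scalerBl scale1r.
by rewrite -scalerAl scalerA mulVf // scale1r.
Qed.

End DilationModel.

Section LeftModuleAx.
Variables (K : fieldType) (q : K) (A : algType K) (a b : A).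
Hypotheses (hq0 : q != 0) (hq : forall n, (0 < n)%N -> q ^+ n != 1).
Hypothesis hA : is_qWeyl_algebra q a b.
Variables (f : A -> endo (fullsp {poly K})) (f_morph : is_alg_morph f).
Hypotheses (f_a : f a = dil_a q) (f_b : f b = dil_b q).
Local Notation w := (a * b - b * a).
Local Notation x := ((1 - q) *: b - 1).
Local Notation Ax := (lprinc x).
Local Notation wN m := (lmul_submod Ax (w ^+ m)).
Local Notation phi := (orbit_map f).

Let hq1 : 1 - q != 0 := one_sub_neq0 hq.

Let f_w : f w = lmul_full 'X.
Proof. by rewrite !(alg_morphB f_morph, alg_morphM f_morph) f_a f_b dil_commutator. Qed.

Let f_qb : f ((1 - q) *: b) = dilate q^-1.
Proof. by rewrite (alg_morphZ f_morph) f_b scalerA mulfV // scale1r. Qed.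

Let f_x1 : f x 1 = 0.
Proof.
by rewrite (alg_morphB f_morph) f_qb (alg_morph1 f_morph) endo_addE -polyC1 dilateC subrr.
Qed.

Let phi_eq0 := orbit_map_eq0 f_morph f_w f_x1 (in_poly_w_x hA hq0 hq1).

Let phi0 : phi 0 = 0.
Proof. by apply/phi_eq0; exists 0; rewrite mul0r. Qed.

Lemma wN_mulXn m y : wN m y <-> exists g, phi y = 'X^m * g.
Proof. exact: (lmul_submod_pow f_morph f_w f_x1 (in_poly_w_x hA hq0 hq1)). Qed.

Lemma wN_take_poly m y : wN m y <-> take_poly m (phi y) = 0.
Proof. by rewrite wN_mulXn take_poly_eq0P. Qed.

Lemma wN_lmul m r y : wN m y -> wN m (r * y).
Proof.
rewrite !wN_mulXn orbit_mapM // => -[g ->]; move: r g.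
apply: (qWeyl_lmul_ind hA) => [g|r1 r2 IH1 IH2 g|k r IH g|r IH g|r IH g].
- by exists g; rewrite (alg_morph1 f_morph).
- have [g1 e1] := IH1 g; have [g2 e2] := IH2 g; exists (g1 + g2).
  by rewrite (alg_morphD f_morph) endo_addE e1 e2 mulrDr.
- have [g1 e1] := IH g; exists (k *: g1).
  by rewrite (alg_morphZ f_morph) endo_scaleE e1 scalerAr.
- have [g1 e1] := IH g; exists ((1 - q *: 'X) * (q ^+ m *: dilate q g1)).
  by rewrite (alg_morphM f_morph) f_a !endo_mulE e1 dilate_mulXn lmul_fullE mulrCA.
- have [g1 e1] := IH g; exists ((1 - q)^-1 *: (q^-1 ^+ m *: dilate q^-1 g1)).
  by rewrite (alg_morphM f_morph) f_b endo_mulE e1 endo_scaleE dilate_mulXn scalerAr.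
Qed.

Lemma lprinc_x_wN m y : Ax y -> wN m y.
Proof. by move/phi_eq0 => phi_y; apply/wN_take_poly; rewrite phi_y take_poly0r. Qed.

Lemma wN_submod m : submod_quot Ax (wN m).
Proof.
split; last exact: lprinc_x_wN.
split; last exact: wN_lmul.
  by apply: lprinc_x_wN; exists 0; rewrite mul0r.
move=> y z /wN_take_poly Ny /wN_take_poly Nz; apply/wN_take_poly.
by rewrite orbit_mapD // take_polyD Ny Nz addr0.
Qed.

Lemma wN_succ m y : wN m.+1 y -> wN m y.
Proof. by rewrite !wN_mulXn => -[g ->]; exists ('X * g); rewrite exprSr mulrA. Qed.

Lemma wN_pow m : wN m (w ^+ m) /\ ~ wN m.+1 (w ^+ m).
Proof.
have phi_wm := orbit_map_pow f_morph f_w m.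
split; first by apply/wN_mulXn; exists 1; rewrite phi_wm mulr1.
move/wN_take_poly/(congr1 (fun p : {poly K} => p`_m)).
by rewrite phi_wm coef_take_poly ltnSn coefXn eqxx coef0 => /eqP; rewrite oner_eq0.
Qed.

Lemma wN_nonzero m : nonzero_submod Ax (wN m).
Proof. by have [wNm NwNm] := wN_pow m; exists (w ^+ m); split=> // /(lprinc_x_wN m.+1). Qed.

Lemma exprV_neq m d : (m < d)%N -> q^-1 ^+ m != q^-1 ^+ d.
Proof.
move=> lt_md; rewrite -(subnKC (ltnW lt_md)) exprD -{1}[q^-1 ^+ m]mulr1.
rewrite (inj_eq (mulfI (expf_neq0 _ (invr_neq0 hq0)))) eq_sym exprVn invr_eq1.
by rewrite hq // subn_gt0.
Qed.

(* The factor (1 - q) b - q^-d multiplies t^i by q^-i - q^-d: it kills the top coefficient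
   and, q not being a root of unity, keeps the m-th one. *)
Lemma submod_monomial (S : A -> Prop) m : S 0 -> (forall r y, S y -> S (r * y)) ->
    (forall y, S y -> take_poly m (phi y) = 0) ->
  forall y, S y -> exists2 s, S s & phi s = (phi y)`_m *: 'X^m.
Proof.
move=> S0 SM S_low y; move: {2}(size (phi y)) (leqnn (size (phi y))) => n.
elim: n y => [|n IH] y size_y Sy.
  exists 0 => //; have -> : phi y = 0 by apply/eqP; rewrite -size_poly_eq0 -leqn0.
  by rewrite phi0 coef0 scale0r.
have [le_size|lt_m_size] := leqP (size (phi y)) m.+1.
  exists y => //; apply/polyP => i; rewrite coefZ coefXn.
  case: (ltngtP i m) => [lt_im|lt_mi|->]; last by rewrite mulr1.
  - have := congr1 (fun p : {poly K} => p`_i) (S_low y Sy).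
    by rewrite coef_take_poly lt_im coef0 mulr0.
  - by rewrite mulr0 nth_default // (leq_trans le_size).
set d := (size (phi y)).-1.
have size_d : size (phi y) = d.+1 by rewrite prednK // (leq_ltn_trans _ lt_m_size).
have lt_md : (m < d)%N by rewrite -ltnS -size_d.
pose y' := ((1 - q) *: b - q^-1 ^+ d *: 1) * y.
have coef_y' i : (phi y')`_i = (q^-1 ^+ i - q^-1 ^+ d) * (phi y)`_i.
  rewrite /y' mulrBl orbit_mapB // orbit_mapM // f_qb -scalerAl mul1r orbit_mapZ //.
  by rewrite coefB coefZ coef_dilate mulrBl.
have [|s Ss phi_s] := IH y' _ (SM _ _ Sy).
  apply/leq_sizeP => j le_nj; rewrite coef_y'.
  have : (d <= j)%N by rewrite (leq_trans _ le_nj) // -ltnS -size_d.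
  rewrite leq_eqVlt => /orP [/eqP <-|lt_dj]; first by rewrite subrr mul0r.
  by rewrite nth_default ?mulr0 // size_d.
have k_neq0 : q^-1 ^+ m - q^-1 ^+ d != 0 by rewrite subr_eq0 exprV_neq.
exists (((q^-1 ^+ m - q^-1 ^+ d)^-1 *: 1) * s); first exact: SM.
rewrite -scalerAl mul1r orbit_mapZ // phi_s coef_y' scalerA mulrA mulVf ?mul1r //.
Qed.

Lemma submod_nonzeroE (S : A -> Prop) : submod_quot Ax S ->
  nonzero_submod Ax S <-> exists m, pred_eq S (wN m).
Proof.
move=> [[S0 SD SM] AxS]; split; last first.
  by move=> [m eq_S]; have [y [/eq_S Sy Ny]] := wN_nonzero m; exists y.
move=> [y0 [Sy0 Ny0]]; have phi_y0 : phi y0 != 0 by apply/eqP => /phi_eq0.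
pose P k := `[< exists2 y, S y & (phi y)`_k != 0 >].
have P_lead : P (size (phi y0)).-1.
  by apply/asboolP; exists y0; rewrite // -lead_coefE lead_coef_eq0.
case: (ex_minnP (ex_intro P _ P_lead)) => m /asboolP [y1 Sy1 y1m] m_min.
have S_low y : S y -> take_poly m (phi y) = 0.
  move=> Sy; apply/polyP => i; rewrite coef_take_poly coef0; case: ifP => // lt_im.
  apply/eqP; apply: contraTT lt_im => yi; rewrite -leqNgt; apply: m_min.
  by apply/asboolP; exists y.
have [s Ss phi_s] := submod_monomial S0 SM S_low Sy1.
pose t := (((phi y1)`_m)^-1 *: 1) * s.
have phi_t : phi t = 'X^m.
  by rewrite /t -scalerAl mul1r orbit_mapZ // phi_s scalerA mulVf // scale1r.
exists m => y; split=> [Sy|/wN_mulXn [g phi_y]]; first exact/wN_take_poly/S_low.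
have Ax_y : Ax (y - horner_alg w g * t).
  apply/phi_eq0; rewrite orbit_mapB // orbit_mapM // (rep_horner f_morph f_w).
  by rewrite lmul_fullE phi_t phi_y mulrC subrr.
by rewrite -(subrK (horner_alg w g * t) y); apply: SD; [exact: AxS | apply: (SM); exact: SM].
Qed.

Lemma lprinc_x_submodules :
  [/\ ~ artinian_quot Ax,
      (forall S : A -> Prop, submod_quot Ax S ->
         (nonzero_submod Ax S <-> exists m : nat, pred_eq S (wN m))),
      (forall m : nat, submod_quot Ax (wN m) /\ nonzero_submod Ax (wN m)) &
      (forall m : nat, (forall y, wN m.+1 y -> wN m y) /\
                       exists y, wN m y /\ ~ wN m.+1 y)].
Proof.
have wN_strict m : exists y, wN m y /\ ~ wN m.+1 y by exists (w ^+ m); exact: wN_pow.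
split=> [||m|m]; first exact: strict_chain_not_artinian wN_submod wN_succ wN_strict.
- exact: submod_nonzeroE.
- by split; [exact: wN_submod | exact: wN_nonzero].
- by split; [exact: wN_succ | exact: wN_strict].
Qed.

End LeftModuleAx.

Theorem proposition3p3 (K : fieldType) (q : K) (hq0 : q != 0)
    (hq : forall n : nat, (0 < n)%N -> q ^+ n != 1)
    (A : algType K) (a b : A) (hA : is_qWeyl_algebra q a b)
    (sigma : A -> A) (hsig : is_alg_morph sigma) (hsigbij : bijective sigma)
    (hsa : sigma a = q^-1 *: a) (hsb : sigma b = q *: b) :
  let w := a * b - b * a in
  let J := lprinc a in
  let x := (1 - q) *: b - 1 in
  let Ax := lprinc x in
  let wN := fun m : nat => lmul_submod Ax (w ^+ m) in
  (maximal_left_ideal J /\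
   forall m : nat, ~ exists c : A, J (iter m sigma x * c - 1)) /\
  [/\ ~ artinian_quot Ax,
      (forall S : A -> Prop, submod_quot Ax S ->
         (nonzero_submod Ax S <-> exists m : nat, pred_eq S (wN m))),
      (forall m : nat, submod_quot Ax (wN m) /\ nonzero_submod Ax (wN m)) &
      (forall m : nat, (forall y, wN m.+1 y -> wN m y) /\
                       exists y, wN m y /\ ~ wN m.+1 y)].
Proof.
move=> w J x Ax wN.
have hq1 := one_sub_neq0 hq.
have [f1 [f1_morph f1_a f1_b]] := qWeyl_morph hA (qWeyl_rel_qderiv q).
have [f2 [f2_morph f2_a f2_b]] := qWeyl_morph hA (qWeyl_rel_dilate hq0 hq1).
split; last exact (lprinc_x_submodules hq0 hq hA f2_morph f2_a f2_b).
split; first exact (lprinc_a_maximal hq hA f1_morph f1_a f1_b).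
move=> m; rewrite /x (iter_alg_morph_affine _ _ hsig hsb).
by apply: (lprinc_a_no_rinv hA f1_morph f1_a f1_b); rewrite mulf_neq0 ?expf_neq0.
Qed.
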